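(* Let $\mathcal R$ be a left-linear TRS which is terminating modulo $\mathcal B$. Then $\mathcal R$ is Church–Rosser modulo $\mathcal B$ if and only if $\mathrm{PCP}(\mathcal R)\cup\mathrm{PCP}^\pm(\mathcal R,\mathcal B^\pm)\subseteq\ \downarrow^\sim_{\mathcal R}$.
   Context: Terms are built from a signature $\mathcal F$ and variables $\mathcal V$. A rule $\ell\to r$ is a pair of terms with $\ell\notin\mathcal V$ and $\mathrm{Var}(r)\subseteq\mathrm{Var}(\ell)$; a TRS is a set of rules, an ES a set of equations; a TRS is left-linear if no left-hand side contains a variable twice. For a set $\mathcal E$ of pairs of terms, $s\to_{\mathcal E}t$ iff $s|_p=\ell\sigma$ and $t=s[r\sigma]_p$ for some $(\ell,r)\in\mathcal E$, position $p$ and substitution $\sigma$; $\leftarrow_{\mathcal E}$ is its inverse. $\mathcal B$ is a fixed ES with $\mathrm{Var}(\ell)=\mathrm{Var}(r)$ for all $\ell\approx r\in\mathcal B$; $\sim_{\mathcal B}=\leftrightarrow^*_{\mathcal B}$ and $\mathcal B^\pm=\mathcal B\cup\{t\approx s\mid s\approx t\in\mathcal B\}$. For a TRS $\mathcal R$: $\to_{\mathcal R/\mathcal B}=\sim_{\mathcal B}\cdot\to_{\mathcal R}\cdot\sim_{\mathcal B}$; $s\downarrow^\sim_{\mathcal R}t$ iff $s\to^*_{\mathcal R}\cdot\sim_{\mathcal B}\cdot\leftarrow^*_{\mathcal R}t$. $\mathcal R$ is terminating modulo $\mathcal B$ if there is no infinite $\to_{\mathcal R/\mathcal B}$-sequence,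 and Church–Rosser modulo $\mathcal B$ if $\leftrightarrow^*_{\mathcal R\cup\mathcal B}\subseteq\ \downarrow^\sim_{\mathcal R}$. Critical pairs: for sets of oriented pairs $\mathcal R_1,\mathcal R_2$ (equations of $\mathcal B^\pm$ read as oriented pairs), an overlap is $\langle\ell_1\to r_1,p,\ell_2\to r_2\rangle$ with $\ell_i\to r_i$ variants of elements of $\mathcal R_i$ without common variables, $p$ a non-variable position of $\ell_2$, $\ell_1$ and $\ell_2|_p$ unifiable, and the two rules not variants of each other if $p=\epsilon$. With an mgu $\sigma$ this yields the critical peak $\ell_2\sigma[r_1\sigma]_p\leftarrow^p\ell_2\sigma\to^\epsilon r_2\sigma$ and critical pair $\ell_2\sigma[r_1\sigma]_p\approx r_2\sigma$. A critical peak $t\leftarrow^p s\to^\epsilon u$ is prime if all proper subterms of $s|_p$ are normal forms of $\to_{\mathcal R}$ (irreducibility is always checked w.r.t. $\mathcal R$, also for overlaps involving $\mathcal B^\pm$). $\mathrm{PCP}(\mathcal R)$ is the set of prime critical pairs from overlaps of $\mathcal R$ with itself; $\mathrm{PCP}^\pm(\mathcal R,\mathcal B^\pm)$ is the set of prime critical pairs from overlaps $\langle\rho_1,p,\rho_2\rangle$ with $\rho_1\in\mathcal R,\rho_2\in\mathcal B^\pm$ or $\rho_1\in\mathcal B^\pm,\rho_2\in\mathcal R$. The inclusion of a set of equations in a relation means each $s\approx t$ in the set satisfies $s\downarrow^\sim_{\mathcal R}t$. *)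

From Stdlib Require Import List Relations.
Import ListNotations.

Set Implicit Arguments.

Section TRS.
Variable F : Type.

Inductive term : Type :=
| Var : nat -> term
| Fun : F -> list term -> term.

Fixpoint subst (sigma : nat -> term) (t : term) : term :=
  match t with
  | Var x => sigma x
  | Fun f ts => Fun f (map (subst sigma) ts)
  end.

Fixpoint vars (t : term) : list nat :=
  match t with
  | Var x => [x]
  | Fun f ts => concat (map vars ts)
  end.

(* repl s p a b t : s|_p = a and t = s[b]_p *)
Inductive repl : term -> list nat -> term -> term -> term -> Prop :=
| repl_here : forall a b, repl a [] a b b
| repl_arg : forall f ls a0 rs p a b t',
    repl a0 p a b t' ->
    repl (Fun f (ls ++ a0 :: rs)) (length ls :: p) a b (Fun f (ls ++ t' :: rs)).

Definition subterm_at (t : term) (p : list nat) (a : term) : Prop :=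
  exists b t', repl t p a b t'.

Definition is_var (t : term) : Prop := exists x, t = Var x.

Definition rules := term * term -> Prop.

Definition step (E : rules) (s t : term) : Prop :=
  exists l r p sigma, E (l, r) /\ repl s p (subst sigma l) (subst sigma r) t.

Definition is_TRS (R : rules) : Prop :=
  forall l r, R (l, r) -> ~ is_var l /\ incl (vars r) (vars l).

Definition left_linear (R : rules) : Prop :=
  forall l r, R (l, r) -> NoDup (vars l).

Definition B_ok (B : rules) : Prop :=
  forall l r, B (l, r) -> incl (vars l) (vars r) /\ incl (vars r) (vars l).

Definition Bpm (B : rules) : rules := fun e => B e \/ B (snd e, fst e).

Definition union (E1 E2 : rules) : rules := fun e => E1 e \/ E2 e.

Definition simB (B : rules) : relation term := clos_refl_sym_trans term (step B).

Definition step_mod (R B : rules) (s t : term) : Prop :=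
  exists s' t', simB B s s' /\ step R s' t' /\ simB B t' t.

Definition terminating_modulo (R B : rules) : Prop :=
  ~ exists f : nat -> term, forall n, step_mod R B (f n) (f (S n)).

Definition joinable_mod (R B : rules) (s t : term) : Prop :=
  exists u v, clos_refl_trans term (step R) s u /\ simB B u v /\
              clos_refl_trans term (step R) t v.

Definition CR_modulo (R B : rules) : Prop :=
  forall s t, clos_refl_sym_trans term (step (union R B)) s t -> joinable_mod R B s t.

Definition renaming (pi : nat -> nat) : Prop :=
  (forall x y, pi x = pi y -> x = y) /\ (forall y, exists x, pi x = y).

Definition variant (rho rho' : term * term) : Prop :=
  exists pi, renaming pi /\
    fst rho' = subst (fun x => Var (pi x)) (fst rho) /\
    snd rho' = subst (fun x => Var (pi x)) (snd rho).

Definition variant_of (E : rules) (rho' : term * term) : Prop :=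
  exists rho, E rho /\ variant rho rho'.

Definition rule_vars (rho : term * term) : list nat := vars (fst rho) ++ vars (snd rho).

Definition unifier (sigma : nat -> term) (s t : term) : Prop := subst sigma s = subst sigma t.

Definition mgu (sigma : nat -> term) (s t : term) : Prop :=
  unifier sigma s t /\
  forall tau, unifier tau s t -> exists delta, forall x, tau x = subst delta (sigma x).

Definition normal_form (R : rules) (t : term) : Prop := ~ exists u, step R t u.

(* t ≈ u is a prime critical pair from overlaps <rho1, p, rho2> with rho1 a variant of
   an element of R1 and rho2 a variant of an element of R2; primality w.r.t. R. *)
Definition prime_cp (R R1 R2 : rules) (t u : term) : Prop :=
  exists l1 r1 l2 r2 p a sigma s,
    variant_of R1 (l1, r1) /\ variant_of R2 (l2, r2) /\
    (forall x, In x (rule_vars (l1, r1)) -> ~ In x (rule_vars (l2, r2))) /\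
    subterm_at l2 p a /\ ~ is_var a /\
    ~ (p = [] /\ variant (l1, r1) (l2, r2)) /\
    mgu sigma l1 a /\
    s = subst sigma l2 /\
    repl s p (subst sigma l1) (subst sigma r1) t /\
    u = subst sigma r2 /\
    (forall q v, q <> [] -> subterm_at (subst sigma l1) q v -> normal_form R v).

Definition PCP (R : rules) (t u : term) : Prop := prime_cp R R R t u.

Definition PCPpm (R B : rules) (t u : term) : Prop :=
  prime_cp R R (Bpm B) t u \/ prime_cp R (Bpm B) R t u.

End TRS.

Arguments Var {F} _.

(* Only if: a prime critical pair t ≈ u comes from a peak t ← s → u of [R]- and
   [B^±]-steps, so it is joinable when [R] is Church-Rosser modulo [B].

   If: by well-founded induction along ->_{R/B} one shows that [~B]-equivalent terms
   have [~B]-equivalent [R]-normal forms.  The induction step only needs local peaks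
   t ← s → u, with an [R]-step and an [R]- or [B^±]-step, at terms s below the
   induction point.  Parallel steps commute; an overlap below a variable of the outer
   rule is joinable by left-linearity (for an outer [B]-equation, all copies of the
   variable are rewritten); an overlap at a function position is an instance of a
   critical peak, which is joinable if prime, and otherwise its inner redex contains
   a smaller [R]-redex whose contraction splits the peak into two smaller ones.
   Recombining their joins needs transitivity of joinability, which the induction
   hypothesis provides below the induction point. *)

From Pilot Require Import Defs.
From Stdlib Require Import List Relations Arith Lia Wellfounded Classical ClassicalEpsilon.
Import ListNotations.
Set Implicit Arguments.
Unset Strict Implicit.

Lemma app_cons_inj (A : Type) (ls ls' rs rs' : list A) (a a' : A) :
  ls ++ a :: rs = ls' ++ a' :: rs' -> length ls = length ls' ->
  ls = ls' /\ a = a' /\ rs = rs'.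
Proof.
  revert ls'. induction ls as [|x ls IH]; intros [|x' ls'] E L; simpl in *; try discriminate.
  - injection E; auto.
  - injection E as -> E. destruct (IH ls') as [-> [-> ->]]; auto.
Qed.

Lemma app_cons_lt (A : Type) (ls ls' rs rs' : list A) (a a' : A) :
  ls ++ a :: rs = ls' ++ a' :: rs' -> length ls < length ls' ->
  exists ms, ls' = ls ++ a :: ms /\ rs = ms ++ a' :: rs'.
Proof.
  revert ls'. induction ls as [|x ls IH]; intros [|x' ls'] E L; simpl in *; try lia.
  - injection E as -> ->. eauto.
  - injection E as -> E. destruct (IH ls') as [ms [-> ->]]; [auto|lia|eauto].
Qed.

Lemma NoDup_app_middle (A B C : list nat) x : NoDup (A ++ B ++ C) -> In x B ->
  ~ In x A /\ ~ In x C /\ NoDup B.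
Proof.
  intros H Hx. split; [|split]; [| |now apply NoDup_app_remove_l, NoDup_app_remove_r in H].
  all: apply in_split in Hx; destruct Hx as [B1 [B2 ->]].
  all: rewrite <- (app_assoc B1), <- app_comm_cons, app_assoc in H; apply NoDup_remove_2 in H.
  all: intros Hx; apply H; rewrite !in_app_iff; auto.
Qed.

Lemma lt_S_list_max (V : list nat) x : In x V -> x < S (list_max V).
Proof.
  intros Hx. assert (Hle := proj1 (list_max_le V (list_max V)) (le_n _)).
  rewrite Forall_forall in Hle. specialize (Hle x Hx). lia.
Qed.

Lemma no_infinite_chain_wf (A : Type) (Rel : relation A) :
  ~ (exists f : nat -> A, forall n, Rel (f n) (f (S n))) -> well_founded (transp A Rel).
Proof.
  intros Hfin x. apply NNPP. intros Nx.
  assert (next : forall y : {y | ~ Acc (transp A Rel) y},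
             {z : {z | ~ Acc (transp A Rel) z} | Rel (proj1_sig y) (proj1_sig z)}).
  { intros [y Ny]. apply constructive_indefinite_description.
    destruct (classic (exists z, Rel y z /\ ~ Acc (transp A Rel) z)) as [[z [Hz Nz]]|N].
    - exists (exist _ z Nz). auto.
    - exfalso. apply Ny. constructor. intros z Hz. apply NNPP. eauto. }
  apply Hfin. exists (fun n => proj1_sig (Nat.iter n (fun y => proj1_sig (next y)) (exist _ x Nx))).
  intros n. exact (proj2_sig (next _)).
Qed.

Section Rewriting.
Variable F : Type.
Notation term := (term F).
Implicit Types (s t u v a b c l r : term) (ts us : list term) (sg tau : nat -> term).

(** * Terms and substitutions *)

Section TermInd.
Variable P : term -> Prop.
Hypothesis P_var : forall x, P (Var x).
Hypothesis P_fun : forall f ts, Forall P ts -> P (Fun f ts).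

Fixpoint term_nested_ind (t : term) : P t :=
  match t with
  | Var x => P_var x
  | Fun f ts => P_fun f ((fix args (us : list term) : Forall P us :=
      match us with
      | [] => Forall_nil _
      | u :: us' => Forall_cons _ (term_nested_ind u) (args us')
      end) ts)
  end.
End TermInd.

Fixpoint size (t : term) : nat :=
  match t with Var _ => 1 | Fun _ ts => S (list_sum (map size ts)) end.

Lemma in_vars_Fun f ts a x : In a ts -> In x (vars a) -> In x (vars (Fun f ts)).
Proof. intros Ha Hx. apply in_concat. exists (vars a). split; [apply in_map|]; auto. Qed.

Lemma in_vars_Fun_inv f ts x : In x (vars (Fun f ts)) -> exists a, In a ts /\ In x (vars a).
Proof.
  simpl. intros Hx. apply in_concat in Hx. destruct Hx as [vs [Hvs Hx]].
  apply in_map_iff in Hvs. destruct Hvs as [a [<- Ha]]. eauto.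
Qed.

Lemma subst_subst sg tau t :
  subst tau (subst sg t) = subst (fun x => subst tau (sg x)) t.
Proof.
  induction t as [x|f ts IH] using term_nested_ind; simpl; auto.
  rewrite map_map. f_equal. apply map_ext_in. intros a Ha. rewrite Forall_forall in IH; auto.
Qed.

Lemma subst_ext_vars sg tau t :
  (forall x, In x (vars t) -> sg x = tau x) -> subst sg t = subst tau t.
Proof.
  induction t as [x|f ts IH] using term_nested_ind; intros H; simpl.
  - apply H; simpl; auto.
  - f_equal. apply map_ext_in. intros a Ha. rewrite Forall_forall in IH.
    apply IH; auto. intros x Hx. apply H. eapply in_vars_Fun; eauto.
Qed.

Lemma subst_eq_ext_vars sg tau t :
  subst sg t = subst tau t -> forall x, In x (vars t) -> sg x = tau x.
Proof.
  induction t as [y|f ts IH] using term_nested_ind; intros H x Hx.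
  - simpl in Hx. destruct Hx as [<-|[]]; auto.
  - apply in_vars_Fun_inv in Hx. destruct Hx as [a [Ha Hxa]]. rewrite Forall_forall in IH.
    apply (IH a Ha); auto. simpl in H. injection H as H.
    exact (proj1 map_ext_in_iff H a Ha).
Qed.

Lemma subst_Var t : subst Var t = t.
Proof.
  induction t as [x|f ts IH] using term_nested_ind; simpl; auto.
  f_equal. rewrite <- map_id. apply map_ext_in. rewrite Forall_forall in IH; auto.
Qed.

Lemma in_vars_subst sg t y :
  In y (vars (subst sg t)) <-> exists x, In x (vars t) /\ In y (vars (sg x)).
Proof.
  induction t as [x|f ts IH] using term_nested_ind.
  - simpl. split; [eauto|]. intros [z [[<-|[]] Hy]]; auto.
  - rewrite Forall_forall in IH. split.
    + intros Hy. apply in_vars_Fun_inv in Hy. destruct Hy as [a' [Ha' Hy]].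
      apply in_map_iff in Ha'. destruct Ha' as [a [<- Ha]].
      apply IH in Hy; auto. destruct Hy as [z [Hz Hy]]. exists z. split; auto.
      eapply in_vars_Fun; eauto.
    + intros [z [Hz Hy]]. apply in_vars_Fun_inv in Hz. destruct Hz as [a [Ha Hz]].
      apply (in_vars_Fun f (a := subst sg a)); [apply in_map; auto|]. apply IH; eauto.
Qed.

(** * Positions *)

Lemma repl_nil_inv s a b t : repl s [] a b t -> s = a /\ t = b.
Proof. intros H. inversion H; auto. Qed.

Lemma repl_cons_inv s i p a b t : repl s (i :: p) a b t ->
  exists f ls s0 rs t0, s = Fun f (ls ++ s0 :: rs) /\ i = length ls /\
    repl s0 p a b t0 /\ t = Fun f (ls ++ t0 :: rs).
Proof. intros H. inversion H; subst. do 5 eexists; eauto. Qed.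

Lemma repl_Fun_inv f ls s0 rs p a b t :
  repl (Fun f (ls ++ s0 :: rs)) (length ls :: p) a b t ->
  exists t0, repl s0 p a b t0 /\ t = Fun f (ls ++ t0 :: rs).
Proof.
  intros H. apply repl_cons_inv in H.
  destruct H as [f' [ls' [s0' [rs' [t0 [E [L [H ->]]]]]]]].
  injection E as <- E. destruct (app_cons_inj E L) as [<- [<- <-]]. eauto.
Qed.

Lemma repl_subterm_unique p s a b t a' b' t' :
  repl s p a b t -> repl s p a' b' t' -> a = a'.
Proof.
  revert s t t'. induction p as [|i p IH]; intros s t t' H H'.
  - apply repl_nil_inv in H. apply repl_nil_inv in H'. now destruct H, H'; subst.
  - apply repl_cons_inv in H. destruct H as [f [ls [s0 [rs [t0 [-> [-> [H ->]]]]]]]].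
    apply repl_Fun_inv in H'. destruct H' as [t0' [H' ->]]. eauto.
Qed.

Lemma repl_result_unique p s a b t a' t' :
  repl s p a b t -> repl s p a' b t' -> t = t'.
Proof.
  revert s t t'. induction p as [|i p IH]; intros s t t' H H'.
  - apply repl_nil_inv in H. apply repl_nil_inv in H'. now destruct H, H'; subst.
  - apply repl_cons_inv in H. destruct H as [f [ls [s0 [rs [t0 [-> [-> [H ->]]]]]]]].
    apply repl_Fun_inv in H'. destruct H' as [t0' [H' ->]]. now rewrite (IH _ _ _ H H').
Qed.

Lemma repl_exists s p a b t c : repl s p a b t -> exists t', repl s p a c t'.
Proof.
  intros H. induction H as [|f ls s0 rs p a b t0 H [t' IH]]; eexists; constructor; eauto.
Qed.

Lemma repl_self s p a b t : repl s p a b t -> repl s p a a s.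
Proof. intros H. induction H; constructor; auto. Qed.

Lemma repl_retarget p s a b t c t' : repl s p a b t -> repl s p a c t' -> repl t p b c t'.
Proof.
  revert s t t'. induction p as [|i p IH]; intros s t t' H H'.
  - apply repl_nil_inv in H. apply repl_nil_inv in H'.
    destruct H as [-> ->], H' as [_ ->]. constructor.
  - apply repl_cons_inv in H. destruct H as [f [ls [s0 [rs [t0 [-> [-> [H ->]]]]]]]].
    apply repl_Fun_inv in H'. destruct H' as [t0' [H' ->]]. constructor. eauto.
Qed.

Lemma repl_sym s p a b t : repl s p a b t -> repl t p b a s.
Proof. intros H. exact (repl_retarget H (repl_self H)). Qed.

Lemma repl_app s p a b t q c d : repl s p a b t -> repl a q c d b -> repl s (p ++ q) c d t.
Proof. intros H. induction H; simpl; auto. constructor. auto. Qed.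

Lemma repl_app_inv p q s c d t : repl s (p ++ q) c d t ->
  exists a b, repl s p a b t /\ repl a q c d b.
Proof.
  revert s t. induction p as [|i p IH]; intros s t H; simpl in *.
  - exists s, t. split; [constructor|auto].
  - apply repl_cons_inv in H. destruct H as [f [ls [s0 [rs [t0 [-> [-> [H ->]]]]]]]].
    destruct (IH _ _ H) as [a [b [H1 H2]]]. exists a, b. split; [constructor|]; auto.
Qed.

Lemma repl_subst s p a b t sg :
  repl s p a b t -> repl (subst sg s) p (subst sg a) (subst sg b) (subst sg t).
Proof.
  intros H. induction H; simpl; [constructor|].
  rewrite !map_app. simpl. rewrite <- (length_map (subst sg) ls). constructor. auto.
Qed.

Lemma repl_positions s p a1 b1 t q a2 b2 u :
  repl s p a1 b1 t -> repl s q a2 b2 u ->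
  (exists p', q = p ++ p') \/ (exists q', p = q ++ q') \/
  (exists w, repl t q a2 b2 w /\ repl u p a1 b1 w).
Proof.
  intros H. revert q u. induction H as [|f ls s0 rs p a1 b1 t0 H IH]; intros q u H'.
  - left. exists q. auto.
  - destruct q as [|j q].
    + right; left. exists (length ls :: p). auto.
    + apply repl_cons_inv in H'. destruct H' as [f' [ls' [s0' [rs' [u0 [E [-> [H' ->]]]]]]]].
      injection E as <- E.
      destruct (lt_eq_lt_dec (length ls) (length ls')) as [[L|L]|L].
      * destruct (app_cons_lt E L) as [ms [-> ->]]. right; right.
        exists (Fun f (ls ++ t0 :: ms ++ u0 :: rs')). rewrite <- !app_assoc. split.
        -- rewrite !app_comm_cons, !app_assoc.
           replace (length (ls ++ s0 :: ms)) with (length (ls ++ t0 :: ms))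
             by (rewrite !length_app; auto).
           constructor. auto.
        -- constructor. auto.
      * destruct (app_cons_inj E L) as [<- [<- <-]].
        destruct (IH q u0 H') as [[p' ->]|[[q' ->]|[w [W1 W2]]]].
        -- left. exists p'. auto.
        -- right; left. exists q'. auto.
        -- right; right. exists (Fun f (ls ++ w :: rs)). split; constructor; auto.
      * symmetry in E. destruct (app_cons_lt E L) as [ms [-> ->]]. right; right.
        exists (Fun f (ls' ++ u0 :: ms ++ t0 :: rs)). rewrite <- !app_assoc. split.
        -- constructor. auto.
        -- rewrite !app_comm_cons, !app_assoc.
           replace (length (ls' ++ s0' :: ms)) with (length (ls' ++ u0 :: ms))
             by (rewrite !length_app; auto).
           constructor. auto.
Qed.

Lemma size_le_sum a ts : In a ts -> size a <= list_sum (map size ts).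
Proof.
  induction ts as [|b ts IH]; simpl; [tauto|]. intros [->|H]; [lia|]. specialize (IH H). lia.
Qed.

Lemma repl_size s p a b t : repl s p a b t -> size a <= size s /\ (p <> [] -> size a < size s).
Proof.
  intros H. induction H as [|f ls s0 rs p a b t0 H [IH _]]; [split; [auto|congruence]|].
  assert (size s0 <= list_sum (map size (ls ++ s0 :: rs)))
    by (apply size_le_sum, in_or_app; simpl; auto).
  simpl. split; intros; lia.
Qed.

Lemma subterm_size_le s p a : subterm_at s p a -> size a <= size s.
Proof. intros [b [t H]]. apply (repl_size H). Qed.

Lemma subterm_size_lt s p a : subterm_at s p a -> p <> [] -> size a < size s.
Proof. intros [b [t H]]. apply (repl_size H). Qed.

Lemma subterm_at_root s : subterm_at s [] s.
Proof. exists s, s. constructor. Qed.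

Lemma subterm_at_Fun f ls s0 rs p a :
  subterm_at s0 p a -> subterm_at (Fun f (ls ++ s0 :: rs)) (length ls :: p) a.
Proof. intros [b [t H]]. exists b. eexists. constructor. eauto. Qed.

Lemma subterm_vars s p a : subterm_at s p a -> incl (vars a) (vars s).
Proof.
  intros [b [t H]]. induction H; [apply incl_refl|].
  intros x Hx. apply (in_vars_Fun f (a := a0)); auto. apply in_or_app; simpl; auto.
Qed.

Lemma subterm_subst s p a sg : subterm_at s p a -> subterm_at (subst sg s) p (subst sg a).
Proof. intros [b [t H]]. do 2 eexists. apply repl_subst; eauto. Qed.

(** * Rewrite relations *)

Definition context_closed (P : relation term) : Prop :=
  forall a b s p t, P a b -> repl s p a b t -> P s t.

Definition subst_closed (P : relation term) : Prop :=
  forall a b sg, P a b -> P (subst sg a) (subst sg b).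

Lemma step_context_closed (E : rules F) : context_closed (step E).
Proof.
  intros a b s p t [l [r [p' [sg [HE H]]]]] Hs. exists l, r, (p ++ p'), sg.
  split; auto. eapply repl_app; eauto.
Qed.

Lemma step_subst_closed (E : rules F) : subst_closed (step E).
Proof.
  intros a b tau [l [r [p [sg [HE H]]]]]. exists l, r, p, (fun x => subst tau (sg x)).
  split; auto. rewrite <- !subst_subst. apply repl_subst. auto.
Qed.

Lemma step_root (E : rules F) l r sg : E (l, r) -> step E (subst sg l) (subst sg r).
Proof. intros H. exists l, r, [], sg. split; [auto|constructor]. Qed.

Lemma step_variant_of (E : rules F) l r s p sg t :
  variant_of E (l, r) -> repl s p (subst sg l) (subst sg r) t -> step E s t.
Proof.
  intros [[l0 r0] [HE [pi [_ [El Er]]]]] H. simpl in El, Er. subst l r.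
  exists l0, r0, p, (fun x => sg (pi x)). split; auto.
  rewrite !subst_subst in H. exact H.
Qed.

Lemma rt_context_closed P : context_closed P -> context_closed (clos_refl_trans term P).
Proof.
  intros HP a b s p t H. revert s t.
  induction H as [a b H|a|a b c _ IH1 _ IH2]; intros s t Hs.
  - apply rt_step. eapply HP; eauto.
  - rewrite (repl_result_unique Hs (repl_self Hs)). apply rt_refl.
  - destruct (repl_exists b Hs) as [s1 Hs1].
    apply rt_trans with s1; [eapply IH1|eapply IH2]; eauto. eapply repl_retarget; eauto.
Qed.

Lemma rst_context_closed P : context_closed P -> context_closed (clos_refl_sym_trans term P).
Proof.
  intros HP a b s p t H. revert s t.
  induction H as [a b H|a|a b _ IH|a b c _ IH1 _ IH2]; intros s t Hs.
  - apply rst_step. eapply HP; eauto.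
  - rewrite (repl_result_unique Hs (repl_self Hs)). apply rst_refl.
  - apply rst_sym, IH, repl_sym, Hs.
  - destruct (repl_exists b Hs) as [s1 Hs1].
    apply rst_trans with s1; [eapply IH1|eapply IH2]; eauto. eapply repl_retarget; eauto.
Qed.

Lemma rt_subst_closed P : subst_closed P -> subst_closed (clos_refl_trans term P).
Proof.
  intros HP a b sg H. induction H; [apply rt_step, HP|apply rt_refl|eapply rt_trans]; eauto.
Qed.

Lemma rst_subst_closed P : subst_closed P -> subst_closed (clos_refl_sym_trans term P).
Proof.
  intros HP a b sg H.
  induction H; [apply rst_step, HP|apply rst_refl|apply rst_sym|eapply rst_trans]; eauto.
Qed.

Definition update sg x c : nat -> term := fun y => if Nat.eq_dec y x then c else sg y.

Lemma update_pointwise (P : relation term) sg x c :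
  (forall a, P a a) -> P (sg x) c -> forall y, P (sg y) (update sg x c y).
Proof. intros Hrefl Hc y. unfold update. destruct (Nat.eq_dec y x) as [->|]; auto. Qed.

Lemma subterm_at_Var_inv l q x : subterm_at l q (Var x) ->
  (l = Var x /\ q = []) \/
  (exists f ls l0 rs q0,
     l = Fun f (ls ++ l0 :: rs) /\ q = length ls :: q0 /\ subterm_at l0 q0 (Var x)).
Proof.
  intros [b [t H]]. destruct q as [|i q].
  - apply repl_nil_inv in H. left. destruct H; auto.
  - apply repl_cons_inv in H. destruct H as [f [ls [l0 [rs [t0 [-> [-> [H ->]]]]]]]].
    right. exists f, ls, l0, rs, q. repeat split; auto. exists b, t0. auto.
Qed.

Lemma repl_subst_Fun_inv f ls l0 rs sg q a b t :
  repl (subst sg (Fun f (ls ++ l0 :: rs))) (length ls :: q) a b t ->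
  exists t0, repl (subst sg l0) q a b t0 /\
    t = Fun f (map (subst sg) ls ++ t0 :: map (subst sg) rs).
Proof.
  simpl. rewrite map_app. simpl. rewrite <- (length_map (subst sg) ls). apply repl_Fun_inv.
Qed.

Section ContextClosedPreorder.
Variable P : relation term.
Hypothesis P_refl : forall a, P a a.
Hypothesis P_trans : forall a b c, P a b -> P b c -> P a c.
Hypothesis P_context : context_closed P.

Lemma context_closed_args f xs ys : Forall2 P xs ys -> P (Fun f xs) (Fun f ys).
Proof.
  intros H. enough (G : forall pre, P (Fun f (pre ++ xs)) (Fun f (pre ++ ys))) by apply (G []).
  induction H as [|x y xs ys Hxy _ IH]; intros pre; [apply P_refl|].
  apply P_trans with (Fun f (pre ++ y :: xs)).
  - eapply P_context; [exact Hxy|]. constructor. constructor.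
  - specialize (IH (pre ++ [y])). rewrite <- !app_assoc in IH. exact IH.
Qed.

Lemma context_closed_subst t sg tau : (forall y, P (sg y) (tau y)) -> P (subst sg t) (subst tau t).
Proof.
  intros H. induction t as [y|f ts IH] using term_nested_ind; simpl; auto.
  apply context_closed_args. induction IH; simpl; constructor; auto.
Qed.

(* Rewriting below a variable position of [l] is simulated by rewriting the
   substitution, at the price of rewriting the other occurrences of [x] too. *)
Lemma context_closed_below_var l sg q x c t :
  subterm_at l q (Var x) -> repl (subst sg l) q (sg x) c t -> P (sg x) c ->
  P t (subst (update sg x c) l).
Proof.
  revert q t. induction l as [y|f ts IH] using term_nested_ind; intros q t Hx Ht Hc.
  - apply subterm_at_Var_inv in Hx.
    destruct Hx as [[[= ->] ->]|[? [? [? [? [? [? _]]]]]]]; [|discriminate].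
    apply repl_nil_inv in Ht. destruct Ht as [_ ->]. simpl. unfold update.
    destruct (Nat.eq_dec x x); [apply P_refl|congruence].
  - apply subterm_at_Var_inv in Hx.
    destruct Hx as [[? _]|[f' [ls [l0 [rs [q0 [[= <- ->] [-> Hx]]]]]]]]; [discriminate|].
    apply repl_subst_Fun_inv in Ht. destruct Ht as [t0 [Ht ->]].
    assert (Hsg : forall L, Forall2 P (map (subst sg) L) (map (subst (update sg x c)) L)).
    { induction L; simpl; constructor; auto. apply context_closed_subst, update_pointwise; auto. }
    simpl. rewrite map_app. simpl. apply context_closed_args, Forall2_app; auto. constructor; auto.
    rewrite Forall_forall in IH. eapply IH; eauto. apply in_or_app; simpl; auto.
Qed.

End ContextClosedPreorder.

Lemma rt_subst_pointwise (E : rules F) t sg tau :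
  (forall y, clos_refl_trans term (step E) (sg y) (tau y)) ->
  clos_refl_trans term (step E) (subst sg t) (subst tau t).
Proof.
  apply context_closed_subst; [apply rt_refl|eapply rt_trans|].
  apply rt_context_closed, step_context_closed.
Qed.

Lemma rst_subst_pointwise (E : rules F) t sg tau :
  (forall y, clos_refl_sym_trans term (step E) (sg y) (tau y)) ->
  clos_refl_sym_trans term (step E) (subst sg t) (subst tau t).
Proof.
  apply context_closed_subst; [apply rst_refl|eapply rst_trans|].
  apply rst_context_closed, step_context_closed.
Qed.

Lemma repl_below_linear_var l sg q x c t :
  NoDup (vars l) -> subterm_at l q (Var x) -> repl (subst sg l) q (sg x) c t ->
  t = subst (update sg x c) l.
Proof.
  revert q t. induction l as [y|f ts IH] using term_nested_ind; intros q t Hl Hx Ht.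
  - apply subterm_at_Var_inv in Hx.
    destruct Hx as [[[= ->] ->]|[? [? [? [? [? [? _]]]]]]]; [|discriminate].
    apply repl_nil_inv in Ht. destruct Ht as [_ ->]. simpl. unfold update.
    destruct (Nat.eq_dec x x); congruence.
  - apply subterm_at_Var_inv in Hx.
    destruct Hx as [[? _]|[f' [ls [l0 [rs [q0 [[= <- ->] [-> Hx]]]]]]]]; [discriminate|].
    apply repl_subst_Fun_inv in Ht. destruct Ht as [t0 [Ht ->]].
    simpl in Hl. rewrite map_app, concat_app in Hl. simpl in Hl.
    assert (Hx0 : In x (vars l0)) by (apply (subterm_vars Hx); simpl; auto).
    destruct (NoDup_app_middle Hl Hx0) as [Nls [Nrs Hl0]].
    assert (Hother : forall L, ~ In x (concat (map (@vars F) L)) ->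
              map (subst sg) L = map (subst (update sg x c)) L).
    { intros L NL. apply map_ext_in. intros a Ha. apply subst_ext_vars. intros y Hy.
      unfold update. destruct (Nat.eq_dec y x) as [->|]; auto.
      exfalso. apply NL, in_concat. exists (vars a). split; auto. apply in_map; auto. }
    simpl. rewrite map_app. simpl. rewrite (Hother ls Nls), (Hother rs Nrs).
    rewrite Forall_forall in IH. rewrite (IH l0) with (q := q0) (t := t0); auto.
    apply in_or_app; simpl; auto.
Qed.

(** * Most general unifiers *)

Definition equations := list (term * term).
Implicit Type E : equations.

Definition unifies_all sg E : Prop := Forall (fun e => subst sg (fst e) = subst sg (snd e)) E.

Definition unifiable E : Prop := exists tau, unifies_all tau E.

Definition mgu_all mu E : Prop :=
  unifies_all mu E /\ forall tau, unifies_all tau E -> exists d, forall x, tau x = subst d (mu x).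

Fixpoint eqs_vars E : list nat :=
  match E with [] => [] | (a, b) :: E' => vars a ++ vars b ++ eqs_vars E' end.

Fixpoint eqs_size E : nat :=
  match E with [] => 0 | (a, b) :: E' => size a + size b + eqs_size E' end.

Definition eqs_nvars E : nat := length (nodup Nat.eq_dec (eqs_vars E)).

(* Eliminating a solved variable removes it from the problem; decomposing or deleting
   an equation shrinks the problem without adding variables. *)
Definition eqs_lt E' E : Prop :=
  eqs_nvars E' < eqs_nvars E \/ (eqs_nvars E' <= eqs_nvars E /\ eqs_size E' < eqs_size E).

Lemma eqs_lt_wf : well_founded eqs_lt.
Proof.
  enough (G : forall n m E, eqs_nvars E <= n -> eqs_size E <= m -> Acc eqs_lt E)
    by (intros E; exact (G _ _ E (le_n _) (le_n _))).
  induction n as [n IHn] using lt_wf_ind. induction m as [m IHm] using lt_wf_ind.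
  intros E Hn Hm. constructor. intros E' [H|[H1 H2]].
  - exact (IHn (eqs_nvars E') ltac:(lia) _ E' (le_n _) (le_n _)).
  - exact (IHm (eqs_size E') ltac:(lia) E' ltac:(lia) (le_n _)).
Qed.

Lemma eqs_nvars_incl E' E : incl (eqs_vars E') (eqs_vars E) -> eqs_nvars E' <= eqs_nvars E.
Proof.
  intros H. apply NoDup_incl_length; [apply NoDup_nodup|].
  intros y Hy. apply nodup_In in Hy. apply nodup_In. auto.
Qed.

Lemma eqs_nvars_lt E' E x : incl (eqs_vars E') (eqs_vars E) -> In x (eqs_vars E) ->
  ~ In x (eqs_vars E') -> eqs_nvars E' < eqs_nvars E.
Proof.
  intros H Hx Nx. enough (length (x :: nodup Nat.eq_dec (eqs_vars E')) <= eqs_nvars E)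
    by (unfold eqs_nvars in *; simpl in *; lia).
  apply NoDup_incl_length.
  - constructor; [rewrite nodup_In; auto|apply NoDup_nodup].
  - intros y [<-|Hy]; apply nodup_In; [auto|]. apply nodup_In in Hy. auto.
Qed.

Lemma mgu_all_equiv mu E E' :
  (forall sg, unifies_all sg E <-> unifies_all sg E') -> mgu_all mu E' -> mgu_all mu E.
Proof. intros Heq [H1 H2]. split; [apply Heq; auto|]. intros tau Ht. apply H2, Heq, Ht. Qed.

Lemma unifies_all_swap sg a b E : unifies_all sg ((a, b) :: E) <-> unifies_all sg ((b, a) :: E).
Proof. unfold unifies_all. rewrite !Forall_cons_iff. simpl. intuition. Qed.

Lemma eqs_lt_swap E' a b E : eqs_lt E' ((b, a) :: E) -> eqs_lt E' ((a, b) :: E).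
Proof.
  assert (Hn : eqs_nvars ((b, a) :: E) <= eqs_nvars ((a, b) :: E)).
  { apply eqs_nvars_incl. intros y. simpl. rewrite !in_app_iff. tauto. }
  unfold eqs_lt. simpl. lia.
Qed.

Lemma unifies_all_combine sg ts us E : length ts = length us ->
  (unifies_all sg (combine ts us ++ E) <->
   map (subst sg) ts = map (subst sg) us /\ unifies_all sg E).
Proof.
  revert us. induction ts as [|a ts IH]; intros [|b us] L; try discriminate; simpl; [tauto|].
  injection L as L. unfold unifies_all in *. rewrite Forall_cons_iff, IH; auto. simpl.
  split; [intros [-> [-> ?]]; auto|]. intros [[= -> ->] ?]. auto.
Qed.

Lemma eqs_vars_combine ts us E y : length ts = length us ->
  In y (eqs_vars (combine ts us ++ E)) <->
  In y (concat (map (@vars F) ts)) \/ In y (concat (map (@vars F) us)) \/ In y (eqs_vars E).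
Proof.
  revert us. induction ts as [|a ts IH]; intros [|b us] L; try discriminate; simpl; [tauto|].
  injection L as L. rewrite !in_app_iff, IH; auto. tauto.
Qed.

Lemma eqs_size_combine ts us E : length ts = length us ->
  eqs_size (combine ts us ++ E) = list_sum (map size ts) + list_sum (map size us) + eqs_size E.
Proof.
  revert us. induction ts as [|a ts IH]; intros [|b us] L; try discriminate; simpl; auto.
  injection L as L. rewrite IH; auto. lia.
Qed.

Lemma mgu_all_Fun f ts g us E :
  (forall E', eqs_lt E' ((Fun f ts, Fun g us) :: E) -> unifiable E' -> exists mu, mgu_all mu E') ->
  unifiable ((Fun f ts, Fun g us) :: E) -> exists mu, mgu_all mu ((Fun f ts, Fun g us) :: E).
Proof.
  intros IH [tau Htau]. inversion Htau as [|? ? Hfg HE]; subst. simpl in Hfg.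
  injection Hfg as <- Hargs.
  assert (L : length ts = length us)
    by now rewrite <- (length_map (subst tau) ts), Hargs, length_map.
  assert (Heq : forall sg, unifies_all sg ((Fun f ts, Fun f us) :: E) <->
                           unifies_all sg (combine ts us ++ E)).
  { intros sg. rewrite unifies_all_combine; auto. unfold unifies_all. rewrite Forall_cons_iff.
    simpl. split; [intros [[= ?] ?]|intros [-> ?]]; auto. }
  destruct (IH (combine ts us ++ E)) as [mu Hmu].
  - right. split.
    + apply eqs_nvars_incl. intros y Hy. apply eqs_vars_combine in Hy; auto.
      simpl. rewrite !in_app_iff. tauto.
    + rewrite eqs_size_combine; auto. simpl. lia.
  - exists tau. apply Heq. auto.
  - exists mu. apply (mgu_all_equiv Heq Hmu).
Qed.

Lemma size_subst_var_le t sg x : In x (vars t) -> size (sg x) <= size (subst sg t).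
Proof.
  induction t as [y|f ts IH] using term_nested_ind; intros Hx.
  - destruct Hx as [<-|[]]. auto.
  - apply in_vars_Fun_inv in Hx. destruct Hx as [a [Ha Hx]]. rewrite Forall_forall in IH.
    specialize (IH a Ha Hx). simpl.
    pose proof (size_le_sum (a := subst sg a) (ts := map (subst sg) ts) ltac:(apply in_map; auto)).
    lia.
Qed.

Lemma size_subst_var_lt t sg x : In x (vars t) -> t <> Var x -> size (sg x) < size (subst sg t).
Proof.
  destruct t as [y|f ts]; intros Hx Ht.
  - destruct Hx as [<-|[]]. congruence.
  - apply in_vars_Fun_inv in Hx. destruct Hx as [a [Ha Hx]].
    pose proof (size_subst_var_le sg Hx). simpl.
    pose proof (size_le_sum (a := subst sg a) (ts := map (subst sg) ts) ltac:(apply in_map; auto)).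
    lia.
Qed.

Definition eliminate x t E : equations :=
  map (fun e => (subst (update Var x t) (fst e), subst (update Var x t) (snd e))) E.

Lemma eqs_vars_eliminate x t E y : ~ In x (vars t) ->
  In y (eqs_vars (eliminate x t E)) -> y <> x /\ (In y (vars t) \/ In y (eqs_vars E)).
Proof.
  intros Nx. induction E as [|[a b] E IH]; simpl; [tauto|].
  assert (G : forall u, In y (vars (subst (update Var x t) u)) ->
                y <> x /\ (In y (vars t) \/ In y (vars u))).
  { intros u Hu. apply in_vars_subst in Hu. destruct Hu as [z [Hz Hy]]. unfold update in Hy.
    destruct (Nat.eq_dec z x) as [->|]; [split; [intros ->|]; auto|].
    destruct Hy as [<-|[]]. auto. }
  rewrite !in_app_iff. intros [Hy|[Hy|Hy]];
    [destruct (G _ Hy)|destruct (G _ Hy)|destruct (IH Hy)]; intuition.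
Qed.

Lemma subst_update_solved sg x t u :
  sg x = subst sg t -> subst sg (subst (update Var x t) u) = subst sg u.
Proof.
  intros Hx. rewrite subst_subst. apply subst_ext_vars. intros y _.
  unfold update. destruct (Nat.eq_dec y x) as [->|]; auto.
Qed.

Lemma mgu_all_eliminate mu x t E : ~ In x (vars t) -> mgu_all mu (eliminate x t E) ->
  mgu_all (fun y => subst mu (update Var x t y)) ((Var x, t) :: E).
Proof.
  intros Nx [Hmu Hgen].
  assert (Hvar : subst (update Var x t) t = t).
  { transitivity (subst Var t); [|apply subst_Var]. apply subst_ext_vars. intros y Hy.
    unfold update. destruct (Nat.eq_dec y x) as [->|]; [contradiction|auto]. }
  split.
  - constructor.
    + simpl. unfold update at 1. destruct (Nat.eq_dec x x) as [_|]; [|congruence].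
      rewrite <- subst_subst, Hvar. auto.
    + unfold unifies_all, eliminate in Hmu. rewrite Forall_map in Hmu.
      eapply Forall_impl; [|exact Hmu]. intros [a b]. simpl. rewrite !subst_subst. auto.
  - intros sg Hsg. inversion Hsg as [|? ? Hx HE]; subst. simpl in Hx.
    destruct (Hgen sg) as [d Hd].
    + unfold unifies_all, eliminate. rewrite Forall_map. eapply Forall_impl; [|exact HE].
      intros [a b]. simpl. rewrite !subst_update_solved; auto.
    + exists d. intros y. transitivity (subst sg (update Var x t y)).
      * symmetry. exact (subst_update_solved (Var y) Hx).
      * rewrite subst_subst. apply subst_ext_vars. auto.
Qed.

Lemma mgu_all_Var x t E :
  (forall E', eqs_lt E' ((Var x, t) :: E) -> unifiable E' -> exists mu, mgu_all mu E') ->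
  unifiable ((Var x, t) :: E) -> exists mu, mgu_all mu ((Var x, t) :: E).
Proof.
  intros IH [tau Htau]. inversion Htau as [|? ? Hxt HE]; subst. simpl in Hxt.
  destruct (in_dec Nat.eq_dec x (vars t)) as [Ix|Nx].
  - assert (t = Var x) as ->.
    { destruct t as [y|f ts]; [destruct Ix as [->|[]]; auto|].
      pose proof (size_subst_var_lt tau Ix ltac:(discriminate)) as Hocc.
      rewrite <- Hxt in Hocc. lia. }
    destruct (IH E) as [mu Hmu].
    + right. split; [apply eqs_nvars_incl; intros y; simpl; auto|simpl; lia].
    + exists tau. auto.
    + exists mu. apply (mgu_all_equiv (E' := E)); auto.
      intros sg. unfold unifies_all. rewrite Forall_cons_iff. simpl. tauto.
  - destruct (IH (eliminate x t E)) as [mu Hmu].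
    + left. apply eqs_nvars_lt with x; simpl; auto.
      * intros y Hy. destruct (eqs_vars_eliminate Nx Hy) as [_ [?|?]];
          simpl; rewrite in_app_iff; auto.
      * intros Hx. destruct (eqs_vars_eliminate Nx Hx). auto.
    + exists tau. unfold unifies_all, eliminate. rewrite Forall_map.
      eapply Forall_impl; [|exact HE]. intros [a b] Hab. simpl.
      rewrite !subst_update_solved; auto.
    + eexists. apply mgu_all_eliminate; eauto.
Qed.

Lemma unifiable_mgu_all E : unifiable E -> exists mu, mgu_all mu E.
Proof.
  induction E as [E IH] using (well_founded_induction eqs_lt_wf). intros Hu.
  destruct E as [|[a b] E].
  - exists Var. split; [constructor|]. intros tau _. exists tau. auto.
  - destruct a as [x|f ts]; [apply mgu_all_Var; auto|].
    destruct b as [y|g us]; [|apply mgu_all_Fun; auto].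
    destruct (mgu_all_Var (t := Fun f ts) (x := y) (E := E)) as [mu Hmu].
    + intros E' H. apply IH, eqs_lt_swap, H.
    + destruct Hu as [tau Hu]. exists tau. apply unifies_all_swap, Hu.
    + exists mu. revert Hmu. apply mgu_all_equiv. intros sg. apply unifies_all_swap.
Qed.

Lemma mgu_exists sg s t : unifier sg s t -> exists mu, mgu mu s t.
Proof.
  intros H. destruct (@unifiable_mgu_all [(s, t)]) as [mu [H1 H2]].
  - exists sg. constructor; auto.
  - exists mu. split; [inversion H1; auto|]. intros tau Ht. apply H2. constructor; auto.
Qed.

(** * Joinability modulo B *)

Section Joinability.
Variables R B : rules F.
Notation joinable := (joinable_mod R B).

Lemma joinable_context_closed : context_closed joinable.
Proof.
  intros a b s p t [a' [b' [Ha [Hab Hb]]]] Hs.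
  destruct (repl_exists a' Hs) as [s' Hs']. destruct (repl_exists b' Hs) as [t' Ht'].
  exists s', t'. repeat split.
  - exact (rt_context_closed (@step_context_closed R) Ha Hs').
  - exact (rst_context_closed (@step_context_closed B) Hab (repl_retarget Hs' Ht')).
  - exact (rt_context_closed (@step_context_closed R) Hb (repl_retarget Hs Ht')).
Qed.

Lemma joinable_subst_closed : subst_closed joinable.
Proof.
  intros a b sg [a' [b' [Ha [Hab Hb]]]]. exists (subst sg a'), (subst sg b'). repeat split.
  - apply rt_subst_closed; [apply step_subst_closed|auto].
  - apply rst_subst_closed; [apply step_subst_closed|auto].
  - apply rt_subst_closed; [apply step_subst_closed|auto].
Qed.

Lemma joinable_refl a : joinable a a.
Proof. exists a, a. repeat split; constructor 2. Qed.

Lemma joinable_sym a b : joinable a b -> joinable b a.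
Proof. intros [a' [b' [Ha [Hab Hb]]]]. exists b', a'. repeat split; auto. apply rst_sym. auto. Qed.

Lemma simB_Bpm_step a b : step (Bpm B) a b -> simB B a b.
Proof.
  intros [l [r [p [sg [[H|H] Hs]]]]].
  - apply rst_step. exists l, r, p, sg. auto.
  - apply rst_sym, rst_step. exists r, l, p, sg. split; auto. apply repl_sym. auto.
Qed.

Lemma Bpm_step_of_B a b : step B a b \/ step B b a -> step (Bpm B) a b.
Proof.
  intros [[l [r [p [sg [H Hs]]]]]|[l [r [p [sg [H Hs]]]]]].
  - exists l, r, p, sg. split; [left|]; auto.
  - exists r, l, p, sg. split; [right|apply repl_sym]; auto.
Qed.

Lemma Bpm_step_sym a b : step (Bpm B) a b -> step (Bpm B) b a.
Proof.
  intros [l [r [p [sg [H Hs]]]]]. exists r, l, p, sg. split; [|apply repl_sym; auto].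
  destruct H; [right|left]; auto.
Qed.

Inductive rule_kind := KR | KB.

Definition rules_of k : rules F := match k with KR => R | KB => Bpm B end.

Lemma joinable_of_common_reduct k1 k2 t u w : (k1 = KR \/ k2 = KR) ->
  step (rules_of k1) t w -> step (rules_of k2) u w -> joinable t u.
Proof.
  intros Hk Ht Hu. destruct k1, k2; simpl in *.
  - exists w, w. repeat split; [apply rt_step; auto|apply rst_refl|apply rt_step; auto].
  - exists w, u.
    repeat split; [apply rt_step; auto|apply rst_sym, simB_Bpm_step; auto|apply rt_refl].
  - exists t, w. repeat split; [apply rt_refl|apply simB_Bpm_step; auto|apply rt_step; auto].
  - destruct Hk; discriminate.
Qed.

(* Left-linearity makes the outer [R]-rule still applicable after a rewrite
   below one of its variables; a [B]-equation need not be linear, so there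
   the remaining occurrences of the variable are rewritten as well. *)
Lemma variable_overlap_joinable ko ki lo ro sg q x c t :
  left_linear R -> (ko = KR \/ ki = KR) -> rules_of ko (lo, ro) ->
  subterm_at lo q (Var x) -> step (rules_of ki) (sg x) c ->
  repl (subst sg lo) q (sg x) c t -> joinable t (subst sg ro).
Proof.
  intros LL Hk Ho Hx Hc Ht.
  destruct ko, ki; simpl in Ho, Hc; [| | |destruct Hk; discriminate].
  - rewrite (repl_below_linear_var (LL _ _ Ho) Hx Ht).
    exists (subst (update sg x c) ro), (subst (update sg x c) ro).
    split; [|split]; [apply rt_step, step_root; auto|apply rst_refl|].
    apply rt_subst_pointwise, update_pointwise; auto using rt_refl, rt_step.
  - rewrite (repl_below_linear_var (LL _ _ Ho) Hx Ht).
    exists (subst (update sg x c) ro), (subst sg ro).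
    split; [|split]; [apply rt_step, step_root; auto| |apply rt_refl].
    apply rst_sym, rst_subst_pointwise, update_pointwise;
      [apply rst_refl|apply simB_Bpm_step; auto].
  - exists (subst (update sg x c) lo), (subst (update sg x c) ro). split; [|split].
    + apply (context_closed_below_var (P := clos_refl_trans term (step R))) with q;
        eauto using rt_refl, rt_step, rt_trans, rt_context_closed, step_context_closed.
    + apply simB_Bpm_step, step_root. auto.
    + apply rt_subst_pointwise, update_pointwise; auto using rt_refl, rt_step.
Qed.

End Joinability.

(** * Critical peaks *)

Definition rename (pi : nat -> nat) (t : term) : term := subst (fun x => Var (pi x)) t.

Lemma in_vars_rename pi t y : In y (vars (rename pi t)) <-> exists x, In x (vars t) /\ y = pi x.
Proof.
  unfold rename. rewrite in_vars_subst. simpl.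
  split; [intros [x [H [E|[]]]]|intros [x [H ->]]]; eauto.
Qed.

Lemma involution_renaming (pi : nat -> nat) : (forall x, pi (pi x) = x) -> renaming pi.
Proof.
  intros Hpi. split; [|intros y; exists (pi y); auto].
  intros x y E. rewrite <- (Hpi x), <- (Hpi y), E. auto.
Qed.

(* Swapping [0..N) with [N..2N) for [N] above every variable of [V] and [W]. *)
Lemma rename_apart (V W : list nat) :
  exists pi : nat -> nat, (forall x, pi (pi x) = x) /\ forall x, In x V -> ~ In (pi x) W.
Proof.
  set (N := S (list_max (V ++ W))).
  exists (fun x => if x <? N then x + N else if x <? N + N then x - N else x). split.
  - intros x. repeat match goal with |- context [?a <? ?b] => destruct (Nat.ltb_spec a b) end; lia.
  - intros x Hx Hw.
    assert (x < N) by (apply lt_S_list_max, in_or_app; auto).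
    destruct (Nat.ltb_spec x N); [|lia].
    assert (x + N < N) by (apply lt_S_list_max, in_or_app; auto). lia.
Qed.

Definition subst_join (V : list nat) sg tau : nat -> term :=
  fun x => if in_dec Nat.eq_dec x V then sg x else tau x.

Lemma subst_join_in V sg tau t : incl (vars t) V -> subst (subst_join V sg tau) t = subst sg t.
Proof.
  intros H. apply subst_ext_vars. intros x Hx. unfold subst_join.
  destruct (in_dec Nat.eq_dec x V); [auto|exfalso; auto].
Qed.

Lemma subst_join_notin V sg tau t :
  (forall x, In x (vars t) -> ~ In x V) -> subst (subst_join V sg tau) t = subst tau t.
Proof.
  intros H. apply subst_ext_vars. intros x Hx. unfold subst_join.
  destruct (in_dec Nat.eq_dec x V); [exfalso; eapply H; eauto|auto].
Qed.

Lemma variant_of_self (E : rules F) l r : E (l, r) -> variant_of E (l, r).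
Proof.
  intros H. exists (l, r). split; auto. exists (fun x => x).
  split; [apply involution_renaming; auto|]. simpl. rewrite !subst_Var. auto.
Qed.

(* Root overlaps of a rule with a variant of itself are not critical; they are trivial. *)
Lemma variant_root_peak li ri lo ro tau : incl (vars ri) (vars li) ->
  variant (li, ri) (lo, ro) -> subst tau lo = subst tau li -> subst tau ri = subst tau ro.
Proof.
  intros Hv [pi [_ [Elo Ero]]] H. simpl in Elo, Ero. subst lo ro.
  rewrite subst_subst in *. simpl in *. apply subst_ext_vars. intros x Hx.
  symmetry. apply (subst_eq_ext_vars H), Hv, Hx.
Qed.

Section CriticalPeaks.
Variables R E1 E2 : rules F.
Variable J : relation term.
Hypothesis E1_vars : forall l r, E1 (l, r) -> incl (vars r) (vars l).
Hypothesis J_prime_cp : forall t u, prime_cp R E1 E2 t u -> J t u.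
Hypothesis J_subst : subst_closed J.
Hypothesis J_refl : forall a, J a a.

Definition proper_subterms_normal (a : term) : Prop :=
  forall q v, q <> [] -> subterm_at a q v -> normal_form R v.

Lemma proper_subterms_normal_subst a sg :
  proper_subterms_normal (subst sg a) -> proper_subterms_normal a.
Proof.
  intros H q v Hq Hv [w Hw]. apply (H q (subst sg v) Hq (subterm_subst sg Hv)).
  exists (subst sg w). apply step_subst_closed. auto.
Qed.

Lemma critical_peak_instance li ri lo ro q a tau t :
  variant_of E1 (li, ri) -> E2 (lo, ro) ->
  (forall x, In x (rule_vars (li, ri)) -> ~ In x (rule_vars (lo, ro))) ->
  subterm_at lo q a -> ~ is_var a -> subst tau a = subst tau li ->
  repl (subst tau lo) q (subst tau li) (subst tau ri) t ->
  proper_subterms_normal (subst tau li) -> J t (subst tau ro).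
Proof.
  intros Hi Ho Hdisj Ha Na Hunif Ht Hprime.
  destruct (classic (q = [] /\ variant (li, ri) (lo, ro))) as [[-> Hvar]|Nv].
  - destruct Ha as [b0 [t0 Ha]]. apply repl_nil_inv in Ha. destruct Ha as [<- _].
    apply repl_nil_inv in Ht. destruct Ht as [_ ->].
    enough (Hri : incl (vars ri) (vars li)) by (rewrite (variant_root_peak Hri Hvar Hunif); auto).
    destruct Hi as [[l0 r0] [H0 [pi [_ [El Er]]]]]. simpl in El, Er. subst li ri.
    intros y Hy. apply in_vars_rename in Hy. destruct Hy as [x [Hx ->]].
    apply in_vars_rename. exists x. split; auto. apply (E1_vars H0 Hx).
  - destruct (@mgu_exists tau li a) as [mu [Hmu Hgen]]; [unfold unifier; auto|].
    destruct (Hgen tau) as [d Hd]; [unfold unifier; auto|].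
    assert (Hmud : forall u, subst d (subst mu u) = subst tau u).
    { intros u. rewrite subst_subst. apply subst_ext_vars. auto. }
    destruct Ha as [b0 [lo0 Ha]].
    pose proof (repl_subst mu Ha) as Hmu_a. rewrite <- Hmu in Hmu_a.
    destruct (repl_exists (subst mu ri) Hmu_a) as [t0 Ht0].
    assert (Hcp : J t0 (subst mu ro)).
    { apply J_prime_cp. exists li, ri, lo, ro, q, a, mu, (subst mu lo).
      repeat split; auto using variant_of_self.
      - exists b0, lo0. auto.
      - apply (proper_subterms_normal_subst (sg := d)). rewrite Hmud. auto. }
    apply (J_subst d) in Hcp. rewrite Hmud in Hcp.
    pose proof (repl_subst d Ht0) as Ht1. rewrite !Hmud in Ht1.
    rewrite (repl_result_unique Ht Ht1). auto.
Qed.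

Lemma critical_peak_joinable li ri lo ro sgi sgo q a t :
  E1 (li, ri) -> E2 (lo, ro) -> subterm_at lo q a -> ~ is_var a -> subst sgo a = subst sgi li ->
  repl (subst sgo lo) q (subst sgi li) (subst sgi ri) t ->
  proper_subterms_normal (subst sgi li) -> J t (subst sgo ro).
Proof.
  intros Hi Ho Ha Na Hunif Ht Hprime.
  destruct (rename_apart (rule_vars (li, ri)) (rule_vars (lo, ro))) as [pi [Hpi Hapart]].
  set (V := rule_vars (rename pi li, rename pi ri)).
  set (tau := subst_join V (fun x => sgi (pi x)) sgo).
  assert (Hin : forall u, incl (vars u) (rule_vars (li, ri)) ->
                          subst tau (rename pi u) = subst sgi u).
  { intros u Hu. unfold tau. rewrite subst_join_in.
    - unfold rename. rewrite subst_subst. apply subst_ext_vars.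
      intros x _. simpl. rewrite Hpi. auto.
    - intros y Hy. apply in_vars_rename in Hy. destruct Hy as [x [Hx ->]].
      unfold V, rule_vars. simpl. apply in_app_iff.
      apply Hu, in_app_iff in Hx. destruct Hx; [left|right]; apply in_vars_rename; eauto. }
  assert (Hdisj : forall x, In x V -> ~ In x (rule_vars (lo, ro))).
  { intros y Hy. unfold V, rule_vars in Hy. simpl in Hy.
    apply in_app_iff in Hy. destruct Hy as [Hy|Hy]; apply in_vars_rename in Hy;
      destruct Hy as [x [Hx ->]]; apply Hapart, in_app_iff; auto. }
  assert (Hout : forall u, incl (vars u) (rule_vars (lo, ro)) -> subst tau u = subst sgo u).
  { intros u Hu. apply subst_join_notin. intros x Hx HV. eapply Hdisj; eauto. }
  assert (Hli : subst tau (rename pi li) = subst sgi li) by (apply Hin, incl_appl, incl_refl).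
  assert (Hri : subst tau (rename pi ri) = subst sgi ri) by (apply Hin, incl_appr, incl_refl).
  assert (Hlo : subst tau lo = subst sgo lo) by (apply Hout, incl_appl, incl_refl).
  assert (Hro : subst tau ro = subst sgo ro) by (apply Hout, incl_appr, incl_refl).
  assert (Hav : subst tau a = subst sgo a) by (apply Hout, incl_appl, (subterm_vars Ha)).
  rewrite <- Hro.
  apply (critical_peak_instance (li := rename pi li) (ri := rename pi ri)
                                (lo := lo) (q := q) (a := a));
    try rewrite ?Hlo, ?Hli, ?Hri; try congruence; auto.
  exists (li, ri). split; auto. exists pi. split; [apply involution_renaming|]; auto.
Qed.

End CriticalPeaks.

(** * Local peaks *)

Lemma repl_subst_cases l sg q a b t : repl (subst sg l) q a b t ->
  (exists a0, subterm_at l q a0 /\ ~ is_var a0) \/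
  (exists q1 q2 x, q = q1 ++ q2 /\ subterm_at l q1 (Var x)).
Proof.
  revert q t. induction l as [y|f ts IH] using term_nested_ind; intros q t H.
  - right. exists [], q, y. split; [auto|apply subterm_at_root].
  - destruct q as [|i q].
    + left. exists (Fun f ts). split; [apply subterm_at_root|intros [z Hz]; discriminate].
    + apply repl_cons_inv in H. destruct H as [f' [ls [s0 [rs [t0 [[= <- E] [-> [H _]]]]]]]].
      apply map_eq_app in E. destruct E as [ts1 [ts2 [-> [<- E]]]].
      apply map_eq_cons in E. destruct E as [l0 [ts3 [-> [<- <-]]]].
      rewrite Forall_forall in IH. rewrite length_map.
      destruct (IH l0 ltac:(apply in_or_app; simpl; auto) q t0 H)
        as [[a0 [Ha0 Na0]]|[q1 [q2 [x [-> Hx]]]]].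
      * left. exists a0. split; [apply subterm_at_Fun|]; auto.
      * right. exists (length ts1 :: q1), q2, x. split; [auto|apply subterm_at_Fun; auto].
Qed.

Lemma not_proper_subterms_normal (R : rules F) a : ~ proper_subterms_normal R a ->
  exists q l r sg, q <> [] /\ R (l, r) /\ subterm_at a q (subst sg l).
Proof.
  intros H. apply not_all_ex_not in H. destruct H as [q H]. apply not_all_ex_not in H.
  destruct H as [v H]. apply imply_to_and in H. destruct H as [Hq H].
  apply imply_to_and in H. destruct H as [Hv H]. apply NNPP in H.
  destruct H as [w [l [r [p [sg [Hlr Hw]]]]]].
  exists (q ++ p), l, r, sg. split; [destruct q; simpl; congruence|split; auto].
  destruct Hv as [b [t Hv]]. destruct (repl_exists w Hv) as [t' Ht'].
  exists (subst sg r). eexists. apply (repl_app Ht' Hw).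
Qed.

Section LocalPeaks.
Variables R B : rules F.
Notation joinable := (joinable_mod R B).
Notation rules_of := (rules_of R B).
Hypothesis R_vars : forall l r, R (l, r) -> incl (vars r) (vars l).
Hypothesis B_vars : forall l r, Bpm B (l, r) -> incl (vars r) (vars l).
Hypothesis R_left_linear : left_linear R.
Hypothesis prime_cp_joinable : forall ki ko, (ko = KR \/ ki = KR) ->
  forall t u, prime_cp R (rules_of ki) (rules_of ko) t u -> joinable t u.
Variable s : term.
(* Provided by the induction hypothesis of the global argument. *)
Hypothesis joinable_through_reduct :
  forall s' t u, step R s s' -> joinable t s' -> joinable s' u -> joinable t u.

Definition redex k a b : Prop :=
  exists l r sg, rules_of k (l, r) /\ a = subst sg l /\ b = subst sg r.

Lemma redex_step k a b s0 p t : redex k a b -> repl s0 p a b t -> step (rules_of k) s0 t.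
Proof. intros [l [r [sg [H [-> ->]]]]] Hs. exists l, r, p, sg. auto. Qed.

Lemma rules_of_vars k l r : rules_of k (l, r) -> incl (vars r) (vars l).
Proof. destruct k; simpl; auto. Qed.

Definition peaks_joinable_below m : Prop :=
  forall k1 k2 p1 p2 a1 b1 a2 b2 t u, size a1 + size a2 < m -> (k1 = KR \/ k2 = KR) ->
  redex k1 a1 b1 -> repl s p1 a1 b1 t -> redex k2 a2 b2 -> repl s p2 a2 b2 u -> joinable t u.

(* If the inner redex is not prime, it contains a smaller [R]-redex; rewriting
   that one yields a reduct of [s] which closes both smaller peaks. *)
Lemma nested_peak_not_prime m ko ki p q ao bo ai bi to ti :
  peaks_joinable_below m -> size ao + size ai < S m -> (ko = KR \/ ki = KR) ->
  redex ko ao bo -> repl s p ao bo to -> redex ki ai bi -> repl s (p ++ q) ai bi ti ->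
  subterm_at ao q ai -> ~ proper_subterms_normal R ai -> joinable to ti.
Proof.
  intros IH Hm Hk Ho Hto Hi Hti Hai Np.
  destruct (not_proper_subterms_normal Np) as [q' [l [r [sg [Hq' [Hlr Hl]]]]]].
  assert (Hsize : size (subst sg l) < size ai) by exact (subterm_size_lt Hl Hq').
  destruct Hl as [b [ai0 Hl]]. destruct (repl_exists (subst sg r) Hl) as [ai' Hl'].
  destruct (repl_exists ai' Hti) as [s' Hs']. pose proof (repl_app Hs' Hl') as Hs3.
  pose proof (subterm_size_le Hai) as Hai_size.
  assert (Hr : redex KR (subst sg l) (subst sg r)) by (exists l, r, sg; auto).
  apply joinable_through_reduct with s'.
  - exact (redex_step Hr Hs3).
  - eapply (IH ko KR); eauto. lia.
  - apply joinable_sym. eapply (IH ki KR); eauto. lia.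
Qed.

Lemma nested_peak_joinable m ko ki p q ao bo ai bi to ti :
  peaks_joinable_below m -> size ao + size ai < S m -> (ko = KR \/ ki = KR) ->
  redex ko ao bo -> repl s p ao bo to -> redex ki ai bi -> repl s (p ++ q) ai bi ti ->
  joinable to ti.
Proof.
  intros IH Hm Hk Ho Hto Hi Hti.
  destruct (repl_app_inv Hti) as [ao' [c [Hc Hai']]].
  pose proof (repl_subterm_unique Hto Hc) as <-.
  assert (Hlift : joinable c bo -> joinable to ti).
  { intros Hj. eapply joinable_context_closed; [apply joinable_sym, Hj|].
    exact (repl_retarget Hto Hc). }
  pose proof Ho as [lo [ro [sgo [Hro [-> ->]]]]].
  destruct (repl_subst_cases Hai') as [[a [Ha Na]]|[q1 [q2 [x [-> Hx]]]]].
  - assert (Hav : subst sgo a = ai).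
    { destruct Ha as [b0 [lo0 Ha]]. exact (repl_subterm_unique (repl_subst sgo Ha) Hai'). }
    destruct (classic (proper_subterms_normal R ai)) as [Hp|Np].
    + apply Hlift. destruct Hi as [li [ri [sgi [Hri [-> ->]]]]].
      eapply (critical_peak_joinable (E1 := rules_of ki) (E2 := rules_of ko));
        eauto using rules_of_vars, joinable_subst_closed, joinable_refl.
    + eapply nested_peak_not_prime; eauto. rewrite <- Hav. apply subterm_subst. auto.
  - apply Hlift. destruct (repl_app_inv Hai') as [sx [d [Hsx Hd]]].
    assert (sx = sgo x) as ->.
    { destruct Hx as [b0 [lo0 Hx]]. exact (repl_subterm_unique Hsx (repl_subst sgo Hx)). }
    eapply variable_overlap_joinable; eauto. eapply redex_step; eauto.
Qed.

Lemma peaks_joinable m : peaks_joinable_below m.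
Proof.
  induction m as [|m IH]; intros k1 k2 p1 p2 a1 b1 a2 b2 t u Hm Hk H1 Ht H2 Hu; [lia|].
  destruct (repl_positions Ht Hu) as [[q ->]|[[q ->]|[w [Htw Huw]]]].
  - exact (nested_peak_joinable IH Hm Hk H1 Ht H2 Hu).
  - assert (Hm' : size a2 + size a1 < S m) by lia.
    assert (Hk' : k2 = KR \/ k1 = KR) by tauto.
    apply joinable_sym. exact (nested_peak_joinable IH Hm' Hk' H2 Hu H1 Ht).
  - apply (joinable_of_common_reduct (k1 := k2) (k2 := k1) (w := w)); [tauto| |];
      eapply redex_step; eauto.
Qed.

Lemma local_peak_joinable k t u : step R s t -> step (rules_of k) s u -> joinable t u.
Proof.
  intros [l1 [r1 [p1 [sg1 [H1 Ht]]]]] [l2 [r2 [p2 [sg2 [H2 Hu]]]]].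
  apply (@peaks_joinable (S (size (subst sg1 l1) + size (subst sg2 l2))) KR k p1 p2
           (subst sg1 l1) (subst sg1 r1) (subst sg2 l2) (subst sg2 r2)); auto.
  - exists l1, r1, sg1. auto.
  - exists l2, r2, sg2. auto.
Qed.

End LocalPeaks.

(** * Church-Rosser modulo B *)

Section ChurchRosser.
Variables R B : rules F.
Notation joinable := (joinable_mod R B).
Notation rt := (clos_refl_trans term (step R)).
Notation sim := (simB B).
Hypothesis R_vars : forall l r, R (l, r) -> incl (vars r) (vars l).
Hypothesis B_vars : forall l r, Bpm B (l, r) -> incl (vars r) (vars l).
Hypothesis R_left_linear : left_linear R.
Hypothesis prime_cp_joinable : forall ki ko, (ko = KR \/ ki = KR) ->
  forall t u, prime_cp R (rules_of R B ki) (rules_of R B ko) t u -> joinable t u.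
Hypothesis R_terminating : terminating_modulo R B.

(* [below w x]: [x] rewrites to [w] in one or more [R/B]-steps. *)
Definition below : relation term := clos_trans term (fun a b => step_mod R B b a).

Lemma below_wf : well_founded below.
Proof. apply wf_clos_trans, no_infinite_chain_wf, R_terminating. Qed.

Lemma below_step x y : step R x y -> below y x.
Proof. intros H. apply t_step. exists x, y. repeat split; auto; apply rst_refl. Qed.

Lemma below_sim w c x : below w c -> sim x c -> below w x.
Proof.
  intros H. revert x. induction H as [w c [c' [w' [H1 [H2 H3]]]]|w y c Hwy _ _ IH]; intros x Hx.
  - apply t_step. exists c', w'. split; auto. eapply rst_trans; eauto.
  - apply t_trans with y; [exact Hwy|exact (IH x Hx)].
Qed.

Lemma below_rt w x y : below w x -> rt w y -> below y x.
Proof.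
  intros Hw Hy. apply clos_rt_rt1n in Hy. induction Hy as [|w z y Hz _ IH]; auto.
  apply IH. apply t_trans with w; auto. apply below_step. auto.
Qed.

Lemma normal_form_exists x : exists n, rt x n /\ normal_form R n.
Proof.
  induction x as [x IH] using (well_founded_induction below_wf).
  destruct (classic (normal_form R x)) as [H|H]; [exists x; split; auto; apply rt_refl|].
  apply NNPP in H. destruct H as [y Hy]. destruct (IH y (below_step Hy)) as [n [Hn Nn]].
  exists n. split; auto. apply rt_trans with y; auto. apply rt_step. auto.
Qed.

Lemma rt_normal_form n m : normal_form R n -> rt n m -> m = n.
Proof. intros Nn H. apply clos_rt_rt1n in H. destruct H; [auto|exfalso; apply Nn; eauto]. Qed.

Definition normal_forms_unique x : Prop :=
  forall x' n n', sim x x' -> rt x n -> normal_form R n -> rt x' n' -> normal_form R n' -> sim n n'.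

Section InductionStep.
Variable x : term.
Hypothesis IH : forall w, below w x -> normal_forms_unique w.

Lemma normal_forms_sim_below a b na nb : below a x -> sim a b ->
  rt a na -> normal_form R na -> rt b nb -> normal_form R nb -> sim na nb.
Proof. intros Ha Hab. apply (IH Ha Hab). Qed.

Lemma normal_forms_eq_below a na nb : below a x ->
  rt a na -> normal_form R na -> rt a nb -> normal_form R nb -> sim na nb.
Proof. intros Ha. apply (IH Ha (rst_refl _ _ a)). Qed.

Lemma joinable_trans_below s' t u : below s' x -> joinable t s' -> joinable s' u -> joinable t u.
Proof.
  intros Hs [a [b [Ha [Hab Hb]]]] [c [d [Hc [Hcd Hd]]]].
  destruct (normal_form_exists a) as [na [Hna Na]].
  destruct (normal_form_exists b) as [nb [Hnb Nb]].
  destruct (normal_form_exists c) as [nc [Hnc Nc]].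
  destruct (normal_form_exists d) as [nd [Hnd Nd]].
  exists na, nd. split; [|split]; [eapply rt_trans; eauto| |eapply rt_trans; eauto].
  apply rst_trans with nb; [apply rst_sym|apply rst_trans with nc].
  - apply (normal_forms_sim_below (b := a) (below_rt Hs Hb)); auto. apply rst_sym. auto.
  - apply (normal_forms_eq_below Hs); eauto using rt_trans.
  - apply (normal_forms_sim_below (b := d) (below_rt Hs Hc)); auto.
Qed.

Lemma local_peak_joinable_sim c k t u :
  sim x c -> step R c t -> step (rules_of R B k) c u -> joinable t u.
Proof.
  intros Hc. apply local_peak_joinable; auto.
  intros s' t' u' Hs'. apply joinable_trans_below. apply (below_sim (below_step Hs') Hc).
Qed.

Lemma below_of_sim_step c z a : sim x c -> step R c z -> rt z a -> below a x.
Proof. intros Hc Hz Ha. apply (below_rt (below_sim (below_step Hz) Hc) Ha). Qed.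

Lemma normal_forms_unique_root x1 n m : step R x x1 -> rt x1 n -> normal_form R n ->
  rt x m -> normal_form R m -> sim m n.
Proof.
  intros Hx1 Hn Nn Hm Nm. apply clos_rt_rt1n in Hm. destruct Hm as [|z m Hz Hm].
  - exfalso. apply Nm. eauto.
  - apply clos_rt1n_rt in Hm.
    destruct (local_peak_joinable_sim (k := KR) (rst_refl _ _ x) Hz Hx1) as [a [b [Ha [Hab Hb]]]].
    destruct (normal_form_exists a) as [na [Hna Na]].
    destruct (normal_form_exists b) as [nb [Hnb Nb]].
    apply rst_trans with na; [|apply rst_trans with nb].
    + apply (normal_forms_eq_below (below_step Hz)); eauto using rt_trans.
    + apply (normal_forms_sim_below (b := b) (below_of_sim_step (rst_refl _ _ x) Hz Ha)); auto.
    + apply (normal_forms_eq_below (below_step Hx1)); eauto using rt_trans.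
Qed.

Lemma normal_forms_unique_Bpm_step c c2 n :
  sim x c -> step (Bpm B) c c2 -> (forall m, rt c m -> normal_form R m -> sim m n) ->
  forall m, rt c2 m -> normal_form R m -> sim m n.
Proof.
  intros Hc Hcc2 Qc m Hm Nm.
  assert (Hc2 : sim x c2) by (apply rst_trans with c; auto; apply simB_Bpm_step; auto).
  apply clos_rt_rt1n in Hm. destruct Hm as [|z m Hz Hm].
  - destruct (classic (normal_form R c)) as [Nc|Nc].
    + apply rst_trans with c;
        [apply simB_Bpm_step, Bpm_step_sym; auto|apply Qc; auto using rt_refl].
    + apply NNPP in Nc. destruct Nc as [z Hz].
      destruct (local_peak_joinable_sim (k := KB) Hc Hz Hcc2) as [a [b [Ha [Hab Hb]]]].
      rewrite (rt_normal_form Nm Hb) in Hab.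
      destruct (normal_form_exists a) as [na [Hna Na]].
      apply rst_trans with na; [apply rst_sym|apply Qc; eauto using rt_trans, rt_step].
      apply (normal_forms_sim_below (b := c2) (below_of_sim_step Hc Hz Ha)); auto using rt_refl.
  - apply clos_rt1n_rt in Hm.
    destruct (local_peak_joinable_sim (k := KB) Hc2 Hz (Bpm_step_sym Hcc2))
      as [a [b [Ha [Hab Hb]]]].
    destruct (normal_form_exists a) as [na [Hna Na]].
    destruct (normal_form_exists b) as [nb [Hnb Nb]].
    apply rst_trans with na; [|apply rst_trans with nb].
    + apply (normal_forms_eq_below (below_of_sim_step Hc2 Hz (rt_refl _ _ z)));
        eauto using rt_trans.
    + apply (normal_forms_sim_below (b := b) (below_of_sim_step Hc2 Hz Ha)); auto.
    + apply Qc; eauto using rt_trans.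
Qed.

Lemma normal_forms_unique_sim x1 n c m : step R x x1 -> rt x1 n -> normal_form R n ->
  sim x c -> rt c m -> normal_form R m -> sim m n.
Proof.
  intros Hx1 Hn Nn Hc. apply clos_rst_rstn1 in Hc. revert m.
  induction Hc as [|c c2 Hcc2 Hc IHc].
  - intros m. apply (normal_forms_unique_root Hx1 Hn Nn).
  - apply (normal_forms_unique_Bpm_step (c := c)); auto.
    + apply clos_rstn1_rst. auto.
    + apply Bpm_step_of_B. tauto.
Qed.

End InductionStep.

Lemma all_normal_forms_unique x : normal_forms_unique x.
Proof.
  induction x as [x IH] using (well_founded_induction below_wf).
  intros x' n n' Hx Hn Nn Hn' Nn'.
  apply clos_rt_rt1n in Hn. destruct Hn as [|x1 n Hx1 Hn].
  - apply clos_rt_rt1n in Hn'. destruct Hn' as [|x1' n' Hx1' Hn']; auto.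
    assert (IH' : forall w, below w x' -> normal_forms_unique w)
      by (intros w Hw; apply IH, (below_sim Hw Hx)).
    eapply (normal_forms_unique_sim IH' Hx1' (clos_rt1n_rt _ _ _ _ Hn') Nn').
    + apply rst_sym, Hx.
    + apply rt_refl.
    + exact Nn.
  - apply rst_sym. apply (normal_forms_unique_sim IH Hx1 (clos_rt1n_rt _ _ _ _ Hn) Nn Hx Hn' Nn').
Qed.

Theorem CR_modulo_of_joinable_peaks : CR_modulo R B.
Proof.
  intros s t H.
  destruct (normal_form_exists s) as [ns [Hs Ns]]. destruct (normal_form_exists t) as [nt [Ht Nt]].
  exists ns, nt. split; [|split]; auto. revert ns nt Hs Ns Ht Nt.
  induction H as [s t [l [r [p [sg [[HR|HB] Hst]]]]]|s|s t _ IH|s y t _ IH1 _ IH2];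
    intros ns nt Hs Ns Ht Nt.
  - apply (all_normal_forms_unique (rst_refl _ _ s)); auto.
    apply rt_trans with t; auto. apply rt_step. exists l, r, p, sg. auto.
  - apply (all_normal_forms_unique (x := s) (x' := t)); auto.
    apply rst_step. exists l, r, p, sg. auto.
  - apply (all_normal_forms_unique (rst_refl _ _ s)); auto.
  - apply rst_sym, IH; auto.
  - destruct (normal_form_exists y) as [ny [Hy Ny]].
    apply rst_trans with ny; [apply IH1|apply IH2]; auto.
Qed.

End ChurchRosser.

Lemma rules_of_step_convertible (R B : rules F) k a b : step (rules_of R B k) a b ->
  clos_refl_sym_trans term (step (Defs.union R B)) a b.
Proof.
  destruct k; intros [l [r [p [sg [H Hs]]]]]; simpl in H.
  - apply rst_step. exists l, r, p, sg. split; [left|]; auto.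
  - destruct H as [H|H]; [apply rst_step|apply rst_sym, rst_step].
    + exists l, r, p, sg. split; [right|]; auto.
    + exists r, l, p, sg. split; [right|apply repl_sym]; auto.
Qed.

Lemma prime_cp_convertible (R B : rules F) k1 k2 t u :
  prime_cp R (rules_of R B k1) (rules_of R B k2) t u ->
  clos_refl_sym_trans term (step (Defs.union R B)) t u.
Proof.
  intros [l1 [r1 [l2 [r2 [p [a [sg [s [V1 [V2 [_ [_ [_ [_ [_ [-> [Ht [-> _]]]]]]]]]]]]]]]]]].
  apply rst_trans with (subst sg l2).
  - apply rst_sym, (rules_of_step_convertible (k := k1)). eapply step_variant_of; eauto.
  - apply (rules_of_step_convertible (k := k2)). eapply step_variant_of; eauto. constructor.
Qed.

End Rewriting.

Theorem theorem3p16 (F : Type) (R B : rules F) :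
  B_ok B -> is_TRS R -> left_linear R -> terminating_modulo R B ->
  (CR_modulo R B <->
   (forall t u : term F, PCP R t u \/ PCPpm R B t u -> joinable_mod R B t u)).
Proof.
  intros HB HR LL TM. split.
  - intros CR t u [H|[H|H]]; apply CR.
    + exact (prime_cp_convertible (k1 := KR) (k2 := KR) H).
    + exact (prime_cp_convertible (k1 := KR) (k2 := KB) H).
    + exact (prime_cp_convertible (k1 := KB) (k2 := KR) H).
  - intros Hcp. apply CR_modulo_of_joinable_peaks; auto.
    + intros l r H. apply (HR l r H).
    + intros l r [H|H]; apply (HB _ _ H).
    + intros [|] [|] Hk t u H; apply Hcp;
        [left|right; left|right; right|destruct Hk; discriminate]; exact H.
Qed.
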